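(* Let $M_n$ be the operator below, and let $N\times K$ matrix functions $\varphi,\psi$ satisfy $$M_n\{\varphi\}=\varphi\Lambda,\qquad M_n^{\tau}\{\psi\}=\psi\tilde\Lambda,$$ where $\Lambda,\tilde\Lambda$ are constant $K\times K$ matrices. Let $C$ be a constant nondegenerate $K\times K$ matrix, and put $$\Delta=C+D^{-1}\{\psi^{\top}\varphi\},\qquad W=I-\varphi\Delta^{-1}D^{-1}\psi^{\top},\qquad \hat M_n:=WM_nW^{-1}.$$ Then $$\Phi:=\varphi\Delta^{-1}=W\{\varphi\}C^{-1},\qquad \Psi:=\psi(\Delta^{-1})^{\top}=(W^{-1})^{\tau}\{\psi\}(C^{\top})^{-1},$$ and these functions satisfy $$\hat M_n\{\Phi\}=\Phi\,C\Lambda C^{-1},\qquad \hat M_n^{\tau}\{\Psi\}=\Psi\,C^{\top}\tilde\Lambda (C^{\top})^{-1}.$$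
   Context: $D=\partial/\partial x$. Operators are formal matrix pseudodifferential operators in $D$ whose coefficients are $N\times N$ matrix functions of $x$ and $t_n$; they may also contain the derivation $\partial_{t_n}$, which commutes with $D$. $P\{f\}$ denotes the action of $P$ on $f$, with $D^{-1}$ a fixed $x$-antiderivative that commutes with $\partial_{t_n}$. The formal transpose $P^\tau$ is the anti-automorphism with $(fD^i)^\tau=(-1)^iD^if^\top$, $\partial_{t_n}^\tau=-\partial_{t_n}$, $(PQ)^\tau=Q^\tau P^\tau$. The operator is $$M_n=\alpha_n\partial_{t_n}-\tilde{\mathcal J}_nD^n-\sum_{i=0}^{n-1}v_iD^i-\gamma\mathbf q\mathcal M_0D^{-1}\mathbf r^\top,$$ where $\alpha_n,\gamma\in\mathbb C$, $\tilde{\mathcal J}_n$ is a constant $N\times N$ matrix, the $v_i$ are $N\times N$ matrix functions, $\mathbf q,\mathbf r$ are $N\times m$ matrix functions, and $\mathcal M_0$ is a constant $m\times m$ matrix. The inverse of $W$ is $W^{-1}=I+\varphi D^{-1}\Delta^{-1}\psi^\top$. *)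

From HB Require Import structures.
From mathcomp Require Import all_boot all_order all_algebra.
Set Implicit Arguments. Unset Strict Implicit. Unset Printing Implicit Defensive.
Import GRing.Theory.
Local Open Scope ring_scope.

(* F : the field of constant scalars (alpha_n, gamma live here; F = C in the *)
(*     paper).                                                              *)
(* A : the commutative algebra of scalar functions of (x, t_n).             *)
(* dx = D = d/dx, dt = d/dt_n, ix = D^{-1} = the fixed x-antiderivative,    *)
(* ev = "evaluation at the base point" of the antiderivative, i.e.          *)
(*   ix (dx f) = f - ev f   (ix f = \int_{x0}^x f, ev f = f(x0, t)).         *)
(* Matrix functions are matrices over A; operators act entrywise.           *)

Record diffalg (F : fieldType) (A : comUnitAlgType F) := DiffAlg {
  dx : A -> A;
  dt : A -> A;
  ix : A -> A;
  ev : A -> A }.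

Definition good_diffalg (F : fieldType) (A : comUnitAlgType F)
    (S : diffalg A) : Prop :=
  (
      (forall (c : F) (f g : A), dx S (c *: f + g) = c *: dx S f + dx S g) /\
      (forall f g : A, dx S (f * g) = dx S f * g + f * dx S g) /\
      (forall (c : F) (f g : A), dt S (c *: f + g) = c *: dt S f + dt S g) /\
      (forall f g : A, dt S (f * g) = dt S f * g + f * dt S g) /\
      (forall f : A, dx S (dt S f) = dt S (dx S f))) /\
  (
          (forall (c : F) (f g : A), ix S (c *: f + g) = c *: ix S f + ix S g) /\
          (forall f : A, dx S (ix S f) = f) /\
          (forall f : A, ix S (dt S f) = dt S (ix S f)) /\
          (forall f : A, ix S (dx S f) = f - ev S f) /\
          (forall f g : A, ev S (f * g) = ev S f * ev S g)).

(* Operators: expressions built from multiplication by a matrix function,  *)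
(* D, D^{-1}, d/dt_n, sums and products (composition).  op p q maps         *)
(* p x K matrix functions to q x K matrix functions.                        *)

Inductive op (A : Type) : nat -> nat -> Type :=
| OMul p q (a : 'M[A]_(q, p)) : op A p q
| OD p : op A p p
| ODinv p : op A p p
| ODt p : op A p p
| OAdd p q : op A p q -> op A p q -> op A p q
| OComp p q r : op A q r -> op A p q -> op A p r.

Arguments OMul {A p q} a.
Arguments OD {A p}.
Arguments ODinv {A p}.
Arguments ODt {A p}.
Arguments OAdd {A p q} P Q.
Arguments OComp {A p q r} P Q.

Section Ops.
Variables (F : fieldType) (A : comUnitAlgType F) (S : diffalg A).

Fixpoint act {K : nat} {p q : nat} (P : op A p q) : 'M[A]_(p, K) -> 'M[A]_(q, K) :=
  match P in op _ p q return 'M[A]_(p, K) -> 'M[A]_(q, K) with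
  | OMul _ _ a => fun f => a *m f
  | OD _ => fun f => map_mx (dx S) f
  | ODinv _ => fun f => map_mx (ix S) f
  | ODt _ => fun f => map_mx (dt S) f
  | OAdd _ _ P1 P2 => fun f => act P1 f + act P2 f
  | OComp _ _ _ P1 P2 => fun f => act P1 (act P2 f)
  end.

End Ops.

Section Syntax.
Variable A : comUnitRingType.

Definition oid {p} : op A p p := OMul 1%:M.
Definition oneg {p q} (P : op A p q) : op A p q := OComp (OMul (- 1)%:M) P.
Definition osub {p q} (P Q : op A p q) : op A p q := OAdd P (oneg Q).

Fixpoint tau {p q : nat} (P : op A p q) : op A q p :=
  match P in op _ p q return op A q p with
  | OMul _ _ a => OMul a^T
  | OD _ => oneg OD
  | ODinv _ => oneg ODinv
  | ODt _ => oneg ODt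
  | OAdd _ _ P1 P2 => OAdd (tau P1) (tau P2)
  | OComp _ _ _ P1 P2 => OComp (tau P2) (tau P1)
  end.

Fixpoint Dpow {p} (i : nat) : op A p p :=
  match i with 0 => oid | i.+1 => OComp OD (Dpow i) end.

Fixpoint osum {p q} (n : nat) (P : nat -> op A p q) : op A p q :=
  match n with 0 => OMul 0 | n.+1 => OAdd (osum n P) (P n) end.

End Syntax.
Arguments oid {A p}.
Arguments oneg {A p q} P.
Arguments osub {A p q} P Q.
Arguments tau {A p q} P.
Arguments Dpow {A p} i.
Arguments osum {A p q} n P.

Section Operators.
Variables (F : fieldType) (A : comUnitAlgType F) (S : diffalg A).

Definition is_const_mx {m n} (X : 'M[A]_(m, n)) : Prop :=
  map_mx (dx S) X = 0 /\ map_mx (dt S) X = 0.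

Definition Mop (N m n : nat) (alpha gamma : F) (J : 'M[A]_N)
    (v : nat -> 'M[A]_N) (qf rf : 'M[A]_(N, m)) (M0 : 'M[A]_m) : op A N N :=
  osub (OComp (OMul (alpha%:A)%:M) ODt)
   (OAdd (OComp (OMul J) (Dpow n))
    (OAdd (osum n (fun i => OComp (OMul (v i)) (Dpow i)))
          (OComp (OMul ((gamma%:A : A) *: (qf *m M0))) (OComp ODinv (OMul rf^T))))).

Definition Delta {N K} (C : 'M[A]_K) (phi psi : 'M[A]_(N, K)) : 'M[A]_K :=
  C + map_mx (ix S) (psi^T *m phi).

Definition Wop {N K} (C : 'M[A]_K) (phi psi : 'M[A]_(N, K)) : op A N N :=
  osub oid (OComp (OMul (phi *m invmx (Delta C phi psi)))
                  (OComp ODinv (OMul psi^T))).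

Definition Winvop {N K} (C : 'M[A]_K) (phi psi : 'M[A]_(N, K)) : op A N N :=
  OAdd oid (OComp (OMul phi)
                  (OComp ODinv (OMul (invmx (Delta C phi psi) *m psi^T)))).

Definition hatM {N K} (M : op A N N) (C : 'M[A]_K) (phi psi : 'M[A]_(N, K))
  : op A N N := OComp (Wop C phi psi) (OComp M (Winvop C phi psi)).

End Operators.

From HB Require Import structures.
From mathcomp Require Import all_boot all_order all_algebra.
Import GRing.Theory.
Set Implicit Arguments. Unset Strict Implicit. Unset Printing Implicit Defensive.
Local Open Scope ring_scope.

(* The proof does not use the particular shape of M_n: it works for any
   operator M with M{phi} = phi Lam and M^tau{psi} = psi Lamt.  Its two
   ingredients are:
   - every operator action commutes with right multiplication by a constant
     matrix, since D, D^{-1} and d/dt_n are F-linear, D and d/dt_n are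
     derivations and D^{-1}(f c) = D^{-1}(f) c for x-constant c;
   - the dressing identities W{phi} = Phi C and W^{-1}{Phi} = phi C^{-1}
     (and their transposed versions), which follow from
     D^{-1}{psi^T phi} = Delta - C  and
     D^{-1}{Delta^{-1} psi^T phi Delta^{-1}} = C^{-1} - Delta^{-1};
     the latter holds because D(Delta^{-1}) = - Delta^{-1} psi^T phi Delta^{-1}
     and Delta^{-1} evaluates to C^{-1} at the base point.
   Then hatM{Phi} = W M W^{-1}{Phi} = W M{phi} C^{-1} = W{phi} Lam C^{-1}
   = Phi C Lam C^{-1}, and symmetrically for the transposed problem. *)

Definition linmap (F : fieldType) (A : comUnitAlgType F) (h : A -> A)
    (h_lin : linear h) : {linear A -> A} :=
  HB.pack h (GRing.isLinear.Build F A A *:%R h h_lin).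

Section Derivations.
Variables (F : fieldType) (A : comUnitAlgType F) (d : A -> A).
Hypotheses (d_lin : linear d) (d_leibniz : forall f g : A, d (f * g) = d f * g + f * d g).

Lemma derivation1 : d 1 = 0.
Proof.
have d11 := d_leibniz 1 1; rewrite !mul1r mulr1 in d11.
by apply: (addrI (d 1)); rewrite addr0 -{1}d11.
Qed.

Lemma map_mx_leibniz m n p (X : 'M[A]_(m, n)) (Y : 'M[A]_(n, p)) :
  map_mx d (X *m Y) = map_mx d X *m Y + X *m map_mx d Y.
Proof.
apply/matrixP=> i j; rewrite !mxE [d _](linear_sum (linmap d_lin)) -big_split /=.
by apply: eq_bigr => k _; rewrite d_leibniz !mxE.
Qed.

Lemma map_mx_invmx n (X : 'M[A]_n) : X \in unitmx ->
  map_mx d (invmx X) = - (invmx X *m map_mx d X *m invmx X).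
Proof.
move=> X_unit.
have d_id : map_mx d (X *m invmx X) = 0.
  rewrite mulmxV //; apply/matrixP=> i j.
  by rewrite !mxE [d _](linearMn (linmap d_lin)) /= derivation1 mul0rn.
rewrite map_mx_leibniz in d_id.
rewrite -[map_mx d (invmx X)](mulKmx X_unit) -[X *m _]subr0 -d_id.
by rewrite opprD addrA addrAC subrr add0r mulmxN mulmxA.
Qed.

End Derivations.

Section DifferentialAlgebra.
Variables (F : fieldType) (A : comUnitAlgType F) (S : diffalg A).
Hypothesis hS : good_diffalg S.

Lemma dx_lin : linear (dx S). Proof. by case: hS => [[]]. Qed.
Lemma dx_leibniz f g : dx S (f * g) = dx S f * g + f * dx S g.
Proof. by case: hS => [[_ []]]. Qed.
Lemma dt_lin : linear (dt S). Proof. by case: hS => [[_ [_ []]]]. Qed.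
Lemma dt_leibniz f g : dt S (f * g) = dt S f * g + f * dt S g.
Proof. by case: hS => [[_ [_ [_ []]]]]. Qed.
Lemma ix_lin : linear (ix S). Proof. by case: hS => _ []. Qed.
Lemma dx_ix f : dx S (ix S f) = f. Proof. by case: hS => _ [_ []]. Qed.
Lemma ix_dx f : ix S (dx S f) = f - ev S f.
Proof. by case: hS => _ [_ [_ [_ []]]]. Qed.
Lemma ev_mul f g : ev S (f * g) = ev S f * ev S g.
Proof. by case: hS => _ [_ [_ [_ []]]]. Qed.

Local Notation Dx := (linmap dx_lin).
Local Notation Ix := (linmap ix_lin).

Lemma ix0 : ix S 0 = 0. Proof. exact: (linear0 Ix). Qed.

Lemma evE f : ev S f = f - ix S (dx S f).
Proof. by rewrite ix_dx opprB addrC subrK. Qed.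

Lemma ev_lin : linear (ev S).
Proof. by move=> c f g; rewrite !evE dx_lin ix_lin scalerBr addrACA opprD. Qed.

Lemma ev_monoid : monoid_morphism (ev S).
Proof. by split; [rewrite evE (derivation1 dx_leibniz) ix0 subr0 | exact: ev_mul]. Qed.

(* ev packed as a ring morphism, so that map_mx (ev S) respects products. *)
Definition ev_rmorph : {rmorphism A -> A} :=
  HB.pack (ev S) (GRing.isLinear.Build F A A *:%R (ev S) ev_lin)
                 (GRing.isMonoidMorphism.Build A A (ev S) ev_monoid).

Lemma ev_ix f : ev S (ix S f) = 0.
Proof. by rewrite evE dx_ix subrr. Qed.

Lemma ev_xconst c : dx S c = 0 -> ev S c = c.
Proof. by move=> c_const; rewrite evE c_const ix0 subr0. Qed.

Lemma ix_mulr_xconst f c : dx S c = 0 -> ix S (f * c) = ix S f * c.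
Proof.
move=> c_const; have -> : f * c = dx S (ix S f * c).
  by rewrite dx_leibniz dx_ix c_const mulr0 addr0.
by rewrite ix_dx ev_mul ev_ix mul0r subr0.
Qed.

Lemma map_mx_ix_dx m n (X : 'M[A]_(m, n)) :
  map_mx (ix S) (map_mx (dx S) X) = X - map_mx (ev S) X.
Proof. by apply/matrixP=> i j; rewrite !mxE ix_dx. Qed.

Lemma const_mx_entry m n (X : 'M[A]_(m, n)) :
  is_const_mx S X -> forall i j, dx S (X i j) = 0.
Proof. by case=> /matrixP X_const _ i j; move: (X_const i j); rewrite !mxE. Qed.

Lemma const_mx_ev m n (X : 'M[A]_(m, n)) :
  is_const_mx S X -> map_mx (ev S) X = X.
Proof. by move=> X_const; apply/matrixP=> i j; rewrite mxE ev_xconst ?const_mx_entry. Qed.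

Lemma const_mx_mul m n p (X : 'M[A]_(m, n)) (Y : 'M[A]_(n, p)) :
  is_const_mx S X -> is_const_mx S Y -> is_const_mx S (X *m Y).
Proof.
move=> [X_x X_t] [Y_x Y_t]; split.
  by rewrite (map_mx_leibniz dx_lin dx_leibniz) /= X_x Y_x mul0mx mulmx0 addr0.
by rewrite (map_mx_leibniz dt_lin dt_leibniz) /= X_t Y_t mul0mx mulmx0 addr0.
Qed.

Lemma const_mx_tr m n (X : 'M[A]_(m, n)) :
  is_const_mx S X -> is_const_mx S X^T.
Proof. by case=> X_x X_t; split; rewrite -map_trmx ?X_x ?X_t trmx0. Qed.

Lemma const_mx_inv n (X : 'M[A]_n) :
  X \in unitmx -> is_const_mx S X -> is_const_mx S (invmx X).
Proof.
move=> X_unit [X_x X_t]; split.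
  by rewrite (map_mx_invmx dx_lin dx_leibniz X_unit) /= X_x mulmx0 mul0mx oppr0.
by rewrite (map_mx_invmx dt_lin dt_leibniz X_unit) /= X_t mulmx0 mul0mx oppr0.
Qed.

Lemma act_mulr_const p q (P : op A p q) K K' (f : 'M[A]_(p, K)) (X : 'M[A]_(K, K')) :
  is_const_mx S X -> act S P (f *m X) = act S P f *m X.
Proof.
elim: P K K' f X => {p q} [p q a | p | p | p | p q P1 IH1 P2 IH2
  | p q r P1 IH1 P2 IH2] K K' f X X_const /=.
- by rewrite mulmxA.
- by rewrite (map_mx_leibniz dx_lin dx_leibniz) /= X_const.1 mulmx0 addr0.
- apply/matrixP=> i j; rewrite !mxE [ix S _](linear_sum Ix).
  by apply: eq_bigr => k _; rewrite /= ix_mulr_xconst ?const_mx_entry // !mxE.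
- by rewrite (map_mx_leibniz dt_lin dt_leibniz) /= X_const.2 mulmx0 addr0.
- by rewrite IH1 // IH2 // mulmxDl.
- by rewrite IH2 // IH1.
Qed.

Lemma act_conj_eigen N K (P M Q : op A N N) (f g : 'M[A]_(N, K))
    (Lam X Y : 'M[A]_K) :
  is_const_mx S Lam -> is_const_mx S Y ->
  act S Q f = g *m Y -> act S M g = g *m Lam -> act S P g = f *m X ->
  act S (OComp P (OComp M Q)) f = f *m (X *m Lam *m Y).
Proof.
move=> Lam_const Y_const Qf Mg Pg /=.
rewrite Qf act_mulr_const // Mg -mulmxA act_mulr_const; last exact: const_mx_mul.
by rewrite Pg !mulmxA.
Qed.

Section Dressing.
Variables (N K : nat) (C : 'M[A]_K) (phi psi : 'M[A]_(N, K)).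
Hypotheses (C_const : is_const_mx S C) (C_unit : C \in unitmx).
Hypothesis Delta_unit : Delta S C phi psi \in unitmx.
Local Notation Dl := (Delta S C phi psi).

Lemma act_W K' (f : 'M[A]_(N, K')) :
  act S (Wop S C phi psi) f = f - phi *m invmx Dl *m map_mx (ix S) (psi^T *m f).
Proof. by rewrite /= mul1mx mul_scalar_mx scaleN1r. Qed.

Lemma act_Winv K' (f : 'M[A]_(N, K')) :
  act S (Winvop S C phi psi) f = f + phi *m map_mx (ix S) (invmx Dl *m psi^T *m f).
Proof. by rewrite /= mul1mx. Qed.

Lemma act_tauW K' (f : 'M[A]_(N, K')) :
  act S (tau (Wop S C phi psi)) f
    = f + psi *m map_mx (ix S) ((phi *m invmx Dl)^T *m f).
Proof.
rewrite /= !tr_scalar_mx !mul1mx !mul_scalar_mx !scaleN1r trmxK.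
by rewrite !mulmxN (map_mxN Ix) mulmxN opprK.
Qed.

Lemma act_tauWinv K' (f : 'M[A]_(N, K')) :
  act S (tau (Winvop S C phi psi)) f
    = f - (invmx Dl *m psi^T)^T *m map_mx (ix S) (phi^T *m f).
Proof. by rewrite /= tr_scalar_mx !mul1mx mul_scalar_mx scaleN1r mulmxN. Qed.

Lemma ix_gram : map_mx (ix S) (psi^T *m phi) = Dl - C.
Proof. by rewrite /Delta addrC addKr. Qed.

Lemma ix_gram_tr : map_mx (ix S) (phi^T *m psi) = (Dl - C)^T.
Proof. by rewrite -[phi^T *m psi]trmxK trmx_mul trmxK -map_trmx ix_gram. Qed.

Lemma dx_Delta : map_mx (dx S) Dl = psi^T *m phi.
Proof.
rewrite /Delta (map_mxD Dx) /= C_const.1 add0r.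
by apply/matrixP=> i j; rewrite !mxE dx_ix.
Qed.

(* At the base point Delta reduces to C, hence Delta^{-1} to C^{-1}. *)
Lemma ev_invDelta : map_mx (ev S) (invmx Dl) = invmx C.
Proof.
have ev_Dl : map_mx (ev S) Dl = C.
  rewrite /Delta (map_mxD ev_rmorph) /= const_mx_ev //.
  by apply/matrixP=> i j; rewrite !mxE ev_ix addr0.
have : C *m map_mx (ev S) (invmx Dl) = 1%:M.
  by rewrite -{1}ev_Dl -(map_mxM ev_rmorph) mulmxV // (map_mx1 ev_rmorph).
by move=> CevDl; rewrite -[map_mx _ _](mulKmx C_unit) CevDl mulmx1.
Qed.

Lemma ix_dressing_kernel :
  map_mx (ix S) (invmx Dl *m psi^T *m phi *m invmx Dl) = invmx C - invmx Dl.
Proof.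
have -> : invmx Dl *m psi^T *m phi *m invmx Dl = - map_mx (dx S) (invmx Dl).
  by rewrite (map_mx_invmx dx_lin dx_leibniz Delta_unit) /= dx_Delta !mulmxA opprK.
by rewrite (map_mxN Ix) /= map_mx_ix_dx ev_invDelta opprB.
Qed.

Lemma W_phi : act S (Wop S C phi psi) phi = phi *m invmx Dl *m C.
Proof. by rewrite act_W ix_gram mulmxBr mulmxKV // opprB addrC subrK. Qed.

Lemma Winv_Phi : act S (Winvop S C phi psi) (phi *m invmx Dl) = phi *m invmx C.
Proof. by rewrite act_Winv mulmxA ix_dressing_kernel mulmxBr addrC subrK. Qed.

Lemma tauWinv_psi :
  act S (tau (Winvop S C phi psi)) psi = psi *m (invmx Dl)^T *m C^T.
Proof.
rewrite act_tauWinv ix_gram_tr trmx_mul trmxK trmx_inv linearB /= mulmxBr.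
by rewrite mulmxKV ?unitmx_tr // opprB addrC subrK.
Qed.

Lemma tauW_Psi :
  act S (tau (Wop S C phi psi)) (psi *m (invmx Dl)^T) = psi *m invmx C^T.
Proof.
rewrite act_tauW; have -> : (phi *m invmx Dl)^T *m (psi *m (invmx Dl)^T)
    = (invmx Dl *m psi^T *m phi *m invmx Dl)^T.
  by rewrite !trmx_mul trmxK !mulmxA.
rewrite -map_trmx ix_dressing_kernel linearB /= mulmxBr.
by rewrite addrC subrK trmx_inv.
Qed.

End Dressing.
End DifferentialAlgebra.

Theorem corollary3 (F : fieldType) (A : comUnitAlgType F) (S : diffalg A)
    (hS : good_diffalg S)
    (N K m n : nat) (alpha gamma : F) (J : 'M[A]_N) (v : nat -> 'M[A]_N)
    (qf rf : 'M[A]_(N, m)) (M0 : 'M[A]_m)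
    (phi psi : 'M[A]_(N, K)) (Lam Lamt C : 'M[A]_K) :
  is_const_mx S J -> is_const_mx S M0 ->
  is_const_mx S Lam -> is_const_mx S Lamt -> is_const_mx S C ->
  C \in unitmx ->
  Delta S C phi psi \in unitmx ->
  act S (Mop n alpha gamma J v qf rf M0) phi = phi *m Lam ->
  act S (tau (Mop n alpha gamma J v qf rf M0)) psi = psi *m Lamt ->
  let Dl := Delta S C phi psi in
  let Mn := Mop n alpha gamma J v qf rf M0 in
  let Phi := phi *m invmx Dl in
  let Psi := psi *m (invmx Dl)^T in
  [/\ Phi = act S (Wop S C phi psi) phi *m invmx C,
      Psi = act S (tau (Winvop S C phi psi)) psi *m invmx C^T,
      act S (hatM S Mn C phi psi) Phi = Phi *m (C *m Lam *m invmx C) &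
      act S (tau (hatM S Mn C phi psi)) Psi
        = Psi *m (C^T *m Lamt *m invmx C^T)].
Proof.
move=> _ _ Lam_const Lamt_const C_const C_unit Dl_unit M_phi Mt_psi Dl Mn Phi Psi.
have Ct_unit : C^T \in unitmx by rewrite unitmx_tr.
have Ci_const : is_const_mx S (invmx C) by exact: const_mx_inv.
have Cti_const : is_const_mx S (invmx C^T) by apply: const_mx_inv; last exact: const_mx_tr.
split.
- by rewrite W_phi // mulmxK.
- by rewrite tauWinv_psi // mulmxK.
- exact: (act_conj_eigen hS Lam_const Ci_const (Winv_Phi hS C_const C_unit Dl_unit)
           M_phi (W_phi Dl_unit)).
- exact: (act_conj_eigen hS Lamt_const Cti_const (tauW_Psi hS C_const C_unit Dl_unit)
           Mt_psi (tauWinv_psi Dl_unit)).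
Qed.
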